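(* Assume Assumptions A and B. If the solution $S$ of (IVP) exists on $[r_0,\infty)$, then there is $R>r_0$ such that $S$ is monotone on $(R,\infty)$; consequently $s_\infty:=\lim_{r\to\infty}S(r)$ exists (and lies in $[0,1]$).
   Context: Fix an integer $n\ge2$. For $i=1,2$, $g_i(s)=a^{(i)}_0+a^{(i)}_1s^{\alpha^{(i)}_1}+\dots+a^{(i)}_{N_i}s^{\alpha^{(i)}_{N_i}}$ ($s\ge0$) with $N_i\ge0$, $a^{(i)}_0>0$, $a^{(i)}_j\ge0$, real $0<\alpha^{(i)}_1<\dots<\alpha^{(i)}_{N_i}$; $G_i(u)=g_i(|u|)u$ for $u\in\mathbb R$. Assumption A: $f_1,f_2\in C([0,1])\cap C^1((0,1))$, $f_1(0)=0$, $f_2(1)=0$, $f_1'>0$, $f_2'<0$ on $(0,1)$. Assumption B: $p_c'\in C^1((0,1))$, $p_c'>0$ on $(0,1)$. $F_i(S)=1/(p_c'(S)f_i(S))$. Given $r_0>0$, $c_1,c_2\in\mathbb R$, $s_0\in(0,1)$, (IVP) is: $S'(r)=G_2(c_2r^{1-n})F_2(S)-G_1(c_1r^{1-n})F_1(S)$ for $r>r_0$, $S(r_0)=s_0$, $0<S(r)<1$. *)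

From Stdlib Require Import Reals Lra.
Open Scope R_scope.

(* s^alpha for s >= 0 and alpha > 0 (with 0^alpha = 0); Stdlib's Rpower
   is only meaningful for positive bases. *)
Definition rpow0 (s alpha : R) : R :=
  if Rle_dec s 0 then 0 else Rpower s alpha.

Fixpoint gsum (N : nat) (a alpha : nat -> R) (s : R) : R :=
  match N with
  | O => 0
  | S k => gsum k a alpha s + a (S k) * rpow0 s (alpha (S k))
  end.

Definition gfun (N : nat) (a alpha : nat -> R) (s : R) : R :=
  a O + gsum N a alpha s.

Definition g_data (N : nat) (a alpha : nat -> R) : Prop :=
  0 < a O /\
  (forall j, (1 <= j <= N)%nat -> 0 <= a j) /\
  (forall j, (1 <= j <= N)%nat -> 0 < alpha j) /\
  (forall j, (1 <= j < N)%nat -> alpha j < alpha (S j)).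

Definition Gfun (N : nat) (a alpha : nat -> R) (u : R) : R :=
  gfun N a alpha (Rabs u) * u.

Definition continuous_on_closed (f : R -> R) (a b : R) : Prop :=
  forall x, a <= x <= b -> limit1_in f (fun y => a <= y <= b) (f x) x.

Definition C1_open_with (f f' : R -> R) (a b : R) : Prop :=
  (forall x, a < x < b -> derivable_pt_lim f x (f' x)) /\
  (forall x, a < x < b -> continuity_pt f' x).

Definition Ffun (pcd f : R -> R) (s : R) : R := 1 / (pcd s * f s).

Definition lim_infty (S : R -> R) (l : R) : Prop :=
  forall eps, 0 < eps -> exists M, forall r, M <= r -> Rabs (S r - l) < eps.

From Stdlib Require Import Reals Lra Lia List Classical.
Import ListNotations.
Open Scope R_scope.

(* Put w(r) = r^(1-n), which decreases to 0, and X_i = g_i(|c_i| w) / (p_c'(S) f_i(S)) > 0,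
   so that S' = w (c2 X2 - c1 X1).
   - If c1 c2 <= 0, both terms push S in the same direction: S' is one-signed.
   - If c1 c2 > 0, then S' = K(r) (phi(S) - psi(r)) where K has the constant sign of c2,
     phi = f1/f2 is increasing, and psi(r) = (c1/c2) G1(w)/G2(w) with G_i(w) = g_i(|c_i| w).
     Each G_i is a generalized polynomial sum_k b_k w^(e_k) with real exponents.  Such a
     function has an eventually constant sign as w -> 0+ (factor out the smallest exponent),
     and the derivative of G1/G2 is again of this form, so psi is eventually monotone.
     A trapping argument on the gap E = phi(S) - psi then shows that E, hence S', is
     eventually one-signed: e.g. if K > 0 and psi increases, S decreases wherever E < 0,
     so E decreases there and can never leave the region E < 0.
   The file develops, in order: elementary calculus facts; generalized polynomials and
   their eventual sign; the trapping lemmas and the abstract principle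
   "S' = K (phi(S) - psi) with K one-signed => S' eventually one-signed"; the computations
   specific to (IVP); and finally the theorem. *)

Lemma nondecreasing_of_deriv (T T' : R -> R) a b :
  a <= b -> (forall x, a <= x <= b -> derivable_pt_lim T x (T' x)) ->
  (forall x, a < x < b -> 0 <= T' x) -> T a <= T b.
Proof.
  intros Hab Hd Hs. destruct (Rle_lt_or_eq_dec _ _ Hab) as [Hlt|<-]; [|lra].
  destruct (MVT_cor2 T T' a b Hlt Hd) as [c [Hc Hcin]].
  specialize (Hs c Hcin). nra.
Qed.

Lemma nonincreasing_of_deriv (T T' : R -> R) a b :
  a <= b -> (forall x, a <= x <= b -> derivable_pt_lim T x (T' x)) ->
  (forall x, a < x < b -> T' x <= 0) -> T b <= T a.
Proof.
  intros Hab Hd Hs.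
  enough (- T a <= - T b) by lra.
  apply (nondecreasing_of_deriv (fun x => - T x) (fun x => - T' x) a b Hab).
  - intros x Hx. apply derivable_pt_lim_opp, Hd, Hx.
  - intros x Hx. specialize (Hs x Hx). lra.
Qed.

Lemma increasing_of_pos_deriv (f f' : R -> R) a b :
  (forall x, a < x < b -> derivable_pt_lim f x (f' x)) ->
  (forall x, a < x < b -> 0 < f' x) ->
  forall x y, a < x -> x < y -> y < b -> f x < f y.
Proof.
  intros Hd Hs x y Hx Hxy Hy.
  destruct (MVT_cor2 f f' x y Hxy) as [c [Hc Hcin]]; [intros; apply Hd; lra|].
  specialize (Hs c ltac:(lra)). nra.
Qed.

Lemma decreasing_of_neg_deriv (f f' : R -> R) a b :
  (forall x, a < x < b -> derivable_pt_lim f x (f' x)) ->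
  (forall x, a < x < b -> f' x < 0) ->
  forall x y, a < x -> x < y -> y < b -> f y < f x.
Proof.
  intros Hd Hs x y Hx Hxy Hy. enough (- f x < - f y) by lra.
  apply (increasing_of_pos_deriv (fun x => - f x) (fun x => - f' x) a b); try lra.
  - intros z Hz. apply derivable_pt_lim_opp, Hd, Hz.
  - intros z Hz. specialize (Hs z Hz). lra.
Qed.

Lemma continuity_of_derivable_lim (f : R -> R) x l : derivable_pt_lim f x l -> continuity_pt f x.
Proof. intros H. apply derivable_continuous_pt. exists l. exact H. Qed.

Lemma limit_le (f : R -> R) (D : R -> Prop) l x0 c :
  limit1_in f D l x0 ->
  (forall delta, 0 < delta -> exists y, D y /\ Rabs (y - x0) < delta /\ f y <= c) ->
  l <= c.
Proof.
  intros Hlim Hnear. destruct (Rle_lt_dec l c) as [|Hlt]; [assumption|].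
  destruct (Hlim (l - c) ltac:(lra)) as [delta [Hdelta Hclose]].
  destruct (Hnear delta Hdelta) as [y [HDy [Hy Hfy]]].
  specialize (Hclose y (conj HDy Hy)). simpl in Hclose. unfold R_dist in Hclose.
  apply Rabs_def2 in Hclose. lra.
Qed.

Lemma continuity_pt_pos_near (E : R -> R) x :
  continuity_pt E x -> 0 < E x ->
  exists eta, 0 < eta /\ forall y, Rabs (y - x) < eta -> 0 < E y.
Proof.
  intros Hc Hpos. destruct (Hc (E x) Hpos) as [eta [Heta Hclose]].
  exists eta. split; [exact Heta|]. intros y Hy.
  destruct (Req_dec x y) as [<-|Hne]; [exact Hpos|].
  specialize (Hclose y (conj (conj I Hne) Hy)). simpl in Hclose. unfold R_dist in Hclose.
  apply Rabs_def2 in Hclose. lra.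
Qed.

Lemma pos_of_increasing_from_0 (f fd : R -> R) :
  continuous_on_closed f 0 1 -> C1_open_with f fd 0 1 -> f 0 = 0 ->
  (forall s, 0 < s < 1 -> 0 < fd s) -> forall s, 0 < s < 1 -> 0 < f s.
Proof.
  intros Hc [Hd _] H0 Hpos s Hs.
  pose proof (increasing_of_pos_deriv f fd 0 1 Hd Hpos) as Hincr.
  assert (Hhalf : 0 <= f (s / 2)).
  { rewrite <- H0. apply (limit_le f (fun y => 0 <= y <= 1) (f 0) 0); [apply Hc; lra|].
    intros delta Hdelta. exists (Rmin (delta / 2) (s / 4)).
    assert (0 < Rmin (delta / 2) (s / 4)) by (apply Rmin_glb_lt; lra).
    pose proof (Rmin_l (delta / 2) (s / 4)). pose proof (Rmin_r (delta / 2) (s / 4)).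
    repeat split; try lra.
    - rewrite Rminus_0_r, Rabs_pos_eq; lra.
    - left. apply Hincr; lra. }
  pose proof (Hincr (s / 2) s ltac:(lra) ltac:(lra) ltac:(lra)). lra.
Qed.

Lemma pos_of_decreasing_to_1 (f fd : R -> R) :
  continuous_on_closed f 0 1 -> C1_open_with f fd 0 1 -> f 1 = 0 ->
  (forall s, 0 < s < 1 -> fd s < 0) -> forall s, 0 < s < 1 -> 0 < f s.
Proof.
  intros Hc [Hd _] H1 Hneg s Hs.
  pose proof (decreasing_of_neg_deriv f fd 0 1 Hd Hneg) as Hdecr.
  set (h := (1 + s) / 2).
  assert (Hh : 0 <= f h).
  { rewrite <- H1. apply (limit_le f (fun y => 0 <= y <= 1) (f 1) 1); [apply Hc; lra|].
    intros delta Hdelta. exists (1 - Rmin (delta / 2) ((1 - s) / 4)).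
    assert (0 < Rmin (delta / 2) ((1 - s) / 4)) by (apply Rmin_glb_lt; lra).
    pose proof (Rmin_l (delta / 2) ((1 - s) / 4)). pose proof (Rmin_r (delta / 2) ((1 - s) / 4)).
    repeat split; try lra.
    - rewrite Rabs_left; lra.
    - left. apply Hdecr; unfold h; lra. }
  pose proof (Hdecr s h ltac:(lra) ltac:(unfold h; lra) ltac:(unfold h; lra)). lra.
Qed.

Lemma Rpower_small e t :
  0 < e -> 0 < t -> exists d, 0 < d /\ forall u, 0 < u < d -> Rpower u e < t.
Proof.
  intros He Ht. exists (Rpower t (/ e)). split; [apply exp_pos|].
  intros u Hu.
  assert (Hroot : Rpower (Rpower t (/ e)) e = t)
    by (rewrite Rpower_mult, Rinv_l, Rpower_1 by lra; reflexivity).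
  rewrite <- Hroot. apply Rlt_Rpower_l; lra.
Qed.

Lemma Rpower_antitone p x y : p < 0 -> 0 < x -> x <= y -> Rpower y p <= Rpower x p.
Proof.
  intros Hp Hx Hxy. unfold Rpower.
  destruct (Rle_lt_or_eq_dec x y Hxy) as [Hlt|<-]; [|lra].
  left. apply exp_increasing. assert (ln x < ln y) by (apply ln_increasing; lra). nra.
Qed.

Lemma Rpower_tends_to_0 p d :
  p < 0 -> 0 < d -> exists R1, 0 < R1 /\ forall r, R1 < r -> Rpower r p < d.
Proof.
  intros Hp Hd. exists (exp (ln d / p)). split; [apply exp_pos|]. intros r Hr.
  unfold Rpower. rewrite <- (exp_ln d) by exact Hd. apply exp_increasing.
  apply ln_increasing in Hr; [|apply exp_pos]. rewrite ln_exp in Hr.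
  apply (Rmult_lt_compat_l (- p)) in Hr; [|lra].
  replace (- p * (ln d / p)) with (- ln d) in Hr by (field; lra). lra.
Qed.

Fixpoint gpoly (l : list (R * R)) (u : R) : R :=
  match l with
  | [] => 0
  | (c, e) :: t => c * Rpower u e + gpoly t u
  end.

Definition has_exp (m : R) (p : R * R) : bool :=
  if Req_EM_T (snd p) m then true else false.

Definition coef_sum (l : list (R * R)) : R := fold_right (fun p s => fst p + s) 0 l.

Definition shift_exp (m : R) (l : list (R * R)) : list (R * R) :=
  map (fun p => (fst p, snd p - m)) l.

Lemma gpoly_app l1 l2 u : gpoly (l1 ++ l2) u = gpoly l1 u + gpoly l2 u.
Proof. induction l1 as [|[c e] t IH]; simpl; rewrite ?IH; ring. Qed.

Lemma gpoly_filter_split m l u :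
  gpoly l u = gpoly (filter (has_exp m) l) u
              + gpoly (filter (fun p => negb (has_exp m p)) l) u.
Proof.
  induction l as [|[c e] t IH]; simpl; [ring|].
  destruct (has_exp m (c, e)); simpl; rewrite IH; ring.
Qed.

Lemma length_filter_split m l :
  (length (filter (has_exp m) l) + length (filter (fun p => negb (has_exp m p)) l)
   = length l)%nat.
Proof. induction l as [|p t IH]; simpl; [reflexivity|]. destruct (has_exp m p); simpl; lia. Qed.

Lemma gpoly_same_exp m l u :
  (forall p, In p l -> snd p = m) -> gpoly l u = coef_sum l * Rpower u m.
Proof.
  induction l as [|[c e] t IH]; intros Hm; simpl; [ring|].
  rewrite IH by (intros p Hp; apply Hm; right; exact Hp).
  replace e with m by (symmetry; apply (Hm (c, e)); left; reflexivity). ring.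
Qed.

Lemma gpoly_shift_exp m l u : gpoly l u = Rpower u m * gpoly (shift_exp m l) u.
Proof.
  induction l as [|[c e] t IH]; simpl; [ring|].
  rewrite IH. replace e with (m + (e - m)) at 1 by ring. rewrite Rpower_plus. ring.
Qed.

Lemma gpoly_tends_to_0 l :
  (forall p, In p l -> 0 < snd p) ->
  forall eps, 0 < eps -> exists d, 0 < d /\ forall u, 0 < u < d -> Rabs (gpoly l u) < eps.
Proof.
  induction l as [|[c e] t IH]; intros Hpos eps Heps; simpl.
  { exists 1. split; [lra|]. intros. rewrite Rabs_R0. exact Heps. }
  destruct (IH (fun p Hp => Hpos p (or_intror Hp)) (eps / 2)) as [d1 [Hd1 Ht]]; [lra|].
  assert (He : 0 < e) by exact (Hpos (c, e) (or_introl eq_refl)).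
  destruct (Rpower_small e (eps / (2 * (Rabs c + 1))) He) as [d2 [Hd2 Hu]].
  { pose proof (Rabs_pos c). apply Rdiv_lt_0_compat; lra. }
  exists (Rmin d1 d2). split; [now apply Rmin_glb_lt|].
  intros u [Hu0 Hud]. apply Rmin_Rgt in Hud as [Hud1 Hud2].
  specialize (Ht u (conj Hu0 Hud1)). specialize (Hu u (conj Hu0 Hud2)).
  pose proof (Rabs_pos c). pose proof (exp_pos (e * ln u)) as Hp. fold (Rpower u e) in Hp.
  assert (Hc : Rabs c * Rpower u e <= eps / 2).
  { apply Rle_trans with ((Rabs c + 1) * (eps / (2 * (Rabs c + 1)))).
    - apply Rmult_le_compat; lra.
    - right. field. lra. }
  eapply Rle_lt_trans; [apply Rabs_triang|].
  rewrite Rabs_mult, (Rabs_pos_eq (Rpower u e)) by lra. lra.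
Qed.

Lemma exists_min_exp (p : R * R) l :
  exists q, In q (p :: l) /\ forall q', In q' (p :: l) -> snd q <= snd q'.
Proof.
  induction l as [|r t [q [Hq Hmin]]].
  { exists p. split; [left; reflexivity|]. intros q' [<-|[]]. lra. }
  destruct (Rle_lt_dec (snd q) (snd r)) as [Hle|Hlt].
  - exists q. split; [destruct Hq as [Hq|Hq]; [left|right; right]; exact Hq|].
    intros q' [Hq'|[Hq'|Hq']];
      [apply Hmin; left; exact Hq'|subst q'; exact Hle|apply Hmin; right; exact Hq'].
  - exists r. split; [right; left; reflexivity|].
    intros q' [Hq'|[Hq'|Hq']];
      [pose proof (Hmin q' (or_introl Hq'))|subst q'; lra|pose proof (Hmin q' (or_intror Hq'))];
      lra.
Qed.

Definition eventually_signed_at_0 (f : R -> R) : Prop :=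
  exists d, 0 < d /\
    ((forall u, 0 < u < d -> 0 <= f u) \/ (forall u, 0 < u < d -> f u <= 0)).

Lemma dominant_term_signed (f : R -> R) C m rest :
  C <> 0 -> (forall p, In p rest -> m < snd p) ->
  (forall u, 0 < u -> f u = C * Rpower u m + gpoly rest u) ->
  eventually_signed_at_0 f.
Proof.
  intros HC Hrest Hf.
  destruct (gpoly_tends_to_0 (shift_exp m rest)) with (eps := Rabs C)
    as [d [Hd Hsmall]]; [|now apply Rabs_pos_lt|].
  { intros r Hr. unfold shift_exp in Hr. apply in_map_iff in Hr as [r' [<- Hr']].
    specialize (Hrest r' Hr'). simpl. lra. }
  exists d. split; [exact Hd|].
  destruct (Rle_lt_dec 0 C) as [HCpos|HCneg]; [left|right]; intros u Hu;
    rewrite Hf, (gpoly_shift_exp m rest) by lra;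
    specialize (Hsmall u Hu); apply Rabs_def2 in Hsmall;
    pose proof (exp_pos (m * ln u)) as Hp; fold (Rpower u m) in Hp.
  - rewrite Rabs_pos_eq in Hsmall by lra. nra.
  - rewrite Rabs_left in Hsmall by lra. nra.
Qed.

(* Induction on the number of terms.  With m the smallest exponent and C the sum of the
   coefficients of exponent m: if C = 0 those terms cancel and fewer terms remain;
   otherwise C u^m dominates. *)
Lemma gpoly_eventually_signed_len k :
  forall l, (length l <= k)%nat -> eventually_signed_at_0 (gpoly l).
Proof.
  induction k as [|k IH]; intros l Hl.
  { destruct l; [|simpl in Hl; lia]. exists 1. split; [lra|]. left; intros; simpl; lra. }
  destruct l as [|p t].
  { exists 1. split; [lra|]. left; intros; simpl; lra. }
  destruct (exists_min_exp p t) as [q [Hq Hmin]].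
  set (l := p :: t) in *. set (m := snd q).
  set (lead := filter (has_exp m) l).
  set (rest := filter (fun p => negb (has_exp m p)) l).
  assert (Hlead : forall u, gpoly l u = coef_sum lead * Rpower u m + gpoly rest u).
  { intros u. rewrite (gpoly_filter_split m l u), (gpoly_same_exp m lead); [reflexivity|].
    intros r Hr. apply filter_In in Hr as [_ Hr]. unfold has_exp in Hr.
    destruct (Req_EM_T (snd r) m); [assumption|discriminate]. }
  destruct (Req_EM_T (coef_sum lead) 0) as [Hzero|Hnz].
  - assert (Hshort : (length rest <= k)%nat).
    { assert (Hin : In q lead)
        by (apply filter_In; split; [exact Hq|unfold has_exp; now destruct (Req_EM_T (snd q) m)]).
      assert (Hne : length lead <> 0%nat)
        by (intros H0; apply length_zero_iff_nil in H0; rewrite H0 in Hin; contradiction).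
      pose proof (length_filter_split m l) as Hsplit. fold lead rest in Hsplit.
      simpl in Hl, Hsplit. lia. }
    destruct (IH rest Hshort) as [d [Hd Hs]]. exists d. split; [exact Hd|].
    destruct Hs as [Hs|Hs]; [left|right]; intros u Hu; rewrite Hlead, Hzero;
      specialize (Hs u Hu); lra.
  - apply (dominant_term_signed _ (coef_sum lead) m rest Hnz); [|intros; apply Hlead].
    intros r Hr. apply filter_In in Hr as [Hin Hne]. unfold has_exp in Hne.
    destruct (Req_EM_T (snd r) m); [discriminate|].
    specialize (Hmin r Hin). fold m in Hmin. lra.
Qed.

Lemma gpoly_eventually_signed l : eventually_signed_at_0 (gpoly l).
Proof. exact (gpoly_eventually_signed_len (length l) l (le_n _)). Qed.

Definition gpoly_deriv (l : list (R * R)) : list (R * R) :=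
  map (fun p => (fst p * snd p, snd p - 1)) l.

Definition gpoly_mul (l1 l2 : list (R * R)) : list (R * R) :=
  flat_map (fun p => map (fun q => (fst p * fst q, snd p + snd q)) l2) l1.

Definition gpoly_opp (l : list (R * R)) : list (R * R) := map (fun p => (- fst p, snd p)) l.

Lemma gpoly_opp_eq l u : gpoly (gpoly_opp l) u = - gpoly l u.
Proof. induction l as [|[c e] t IH]; simpl; rewrite ?IH; ring. Qed.

Lemma gpoly_mul_eq l1 l2 u : gpoly (gpoly_mul l1 l2) u = gpoly l1 u * gpoly l2 u.
Proof.
  induction l1 as [|[c e] t IH]; [simpl; ring|].
  unfold gpoly_mul in *. simpl. rewrite gpoly_app, IH.
  assert (Hterm : gpoly (map (fun q => (c * fst q, e + snd q)) l2) u
                  = c * Rpower u e * gpoly l2 u).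
  { clear IH. induction l2 as [|[d f] s IH2]; simpl; [ring|]. rewrite IH2, Rpower_plus. ring. }
  rewrite Hterm. ring.
Qed.

Lemma gpoly_derivable l u : 0 < u -> derivable_pt_lim (gpoly l) u (gpoly (gpoly_deriv l) u).
Proof.
  intros Hu. induction l as [|[c e] t IH]; simpl.
  - apply derivable_pt_lim_const.
  - apply (derivable_pt_lim_plus (fun x => c * Rpower x e) (gpoly t)); [|exact IH].
    replace (c * e * Rpower u (e - 1)) with (c * (e * Rpower u (e - 1))) by ring.
    apply (derivable_pt_lim_scal (fun x => Rpower x e)), derivable_pt_lim_power, Hu.
Qed.

(* A quotient of generalized polynomials with positive denominator is monotone near 0+:
   its derivative has the sign of the generalized polynomial l1' l2 - l1 l2'. *)
Lemma gpoly_ratio_eventually_monotone l1 l2 :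
  (forall u, 0 < u -> 0 < gpoly l2 u) ->
  exists d, 0 < d /\
    ((forall u v, 0 < u -> u <= v -> v < d -> gpoly l1 u / gpoly l2 u <= gpoly l1 v / gpoly l2 v) \/
     (forall u v, 0 < u -> u <= v -> v < d -> gpoly l1 v / gpoly l2 v <= gpoly l1 u / gpoly l2 u)).
Proof.
  intros Hpos.
  set (W := gpoly_mul (gpoly_deriv l1) l2 ++ gpoly_opp (gpoly_mul l1 (gpoly_deriv l2))).
  set (Q' := fun x => gpoly W x / (gpoly l2 x)²).
  assert (HQ : forall x, 0 < x -> derivable_pt_lim (fun y => gpoly l1 y / gpoly l2 y) x (Q' x)).
  { intros x Hx.
    assert (HW : gpoly W x = gpoly (gpoly_deriv l1) x * gpoly l2 x
                             - gpoly (gpoly_deriv l2) x * gpoly l1 x)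
      by (unfold W; rewrite gpoly_app, gpoly_opp_eq, !gpoly_mul_eq; ring).
    unfold Q'. rewrite HW.
    apply (derivable_pt_lim_div (gpoly l1) (gpoly l2)); try apply gpoly_derivable; try exact Hx.
    specialize (Hpos x Hx). lra. }
  assert (HQsign : forall x, 0 < x -> exists k, 0 < k /\ Q' x = k * gpoly W x).
  { intros x Hx. exists (/ (gpoly l2 x)²). split; [|unfold Q', Rdiv; ring].
    apply Rinv_0_lt_compat. specialize (Hpos x Hx). unfold Rsqr. nra. }
  destruct (gpoly_eventually_signed W) as [d [Hd Hs]]. exists d. split; [exact Hd|].
  destruct Hs as [Hs|Hs]; [left|right]; intros u v Hu Huv Hv.
  - apply (nondecreasing_of_deriv (fun y => gpoly l1 y / gpoly l2 y) Q');
      [exact Huv|intros; apply HQ; lra|].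
    intros x Hx. destruct (HQsign x ltac:(lra)) as [k [Hk ->]].
    specialize (Hs x ltac:(lra)). nra.
  - apply (nonincreasing_of_deriv (fun y => gpoly l1 y / gpoly l2 y) Q');
      [exact Huv|intros; apply HQ; lra|].
    intros x Hx. destruct (HQsign x ltac:(lra)) as [k [Hk ->]].
    specialize (Hs x ltac:(lra)). nra.
Qed.

Fixpoint gsum_terms (N : nat) (a alpha : nat -> R) (b : R) : list (R * R) :=
  match N with
  | O => []
  | S k => (a (S k) * Rpower b (alpha (S k)), alpha (S k)) :: gsum_terms k a alpha b
  end.

Definition g_terms (N : nat) (a alpha : nat -> R) (b : R) : list (R * R) :=
  (a O, 0) :: gsum_terms N a alpha b.

Lemma gfun_as_gpoly N a alpha b u :
  0 < b -> 0 < u -> gfun N a alpha (b * u) = gpoly (g_terms N a alpha b) u.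
Proof.
  intros Hb Hu. unfold gfun, g_terms. simpl. rewrite Rpower_O by exact Hu.
  enough (gsum N a alpha (b * u) = gpoly (gsum_terms N a alpha b) u) by lra.
  induction N as [|k IH]; simpl; [reflexivity|]. rewrite IH. unfold rpow0.
  destruct (Rle_dec (b * u) 0); [nra|]. rewrite <- Rpower_mult_distr by assumption. ring.
Qed.

Lemma gfun_pos N a alpha s : g_data N a alpha -> 0 < gfun N a alpha s.
Proof.
  intros [Ha0 [Ha _]]. unfold gfun.
  enough (0 <= gsum N a alpha s) by lra.
  induction N as [|k IH]; simpl; [lra|].
  assert (0 <= a (S k)) by (apply Ha; lia).
  assert (0 <= rpow0 s (alpha (S k)))
    by (unfold rpow0; destruct (Rle_dec s 0); [lra|left; apply exp_pos]).
  assert (0 <= gsum k a alpha s) by (apply IH; intros; apply Ha; lia).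
  nra.
Qed.

Lemma last_crossing (E : R -> R) r1 r2 :
  (forall x, r1 <= x <= r2 -> continuity_pt E x) -> r1 <= r2 -> E r1 <= 0 -> 0 < E r2 ->
  exists c, r1 <= c < r2 /\ E c <= 0 /\ forall x, c < x <= r2 -> 0 < E x.
Proof.
  intros Hc H12 H1 H2.
  set (P := fun x => r1 <= x <= r2 /\ E x <= 0).
  destruct (completeness P) as [c [Hub Hlub]].
  { exists r2. intros x [Hx _]. lra. }
  { exists r1. split; [lra|exact H1]. }
  assert (Hc1 : r1 <= c) by (apply Hub; split; [lra|exact H1]).
  assert (Hc2 : c <= r2) by (apply Hlub; intros x [Hx _]; lra).
  assert (Hafter : forall x, c < x <= r2 -> 0 < E x).
  { intros x Hx. destruct (Rlt_le_dec 0 (E x)) as [|Hle]; [assumption|].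
    assert (x <= c) by (apply Hub; split; [lra|exact Hle]). lra. }
  assert (HEc : E c <= 0).
  { destruct (Rle_lt_dec (E c) 0) as [|Hpos]; [assumption|exfalso].
    destruct (continuity_pt_pos_near E c (Hc c ltac:(lra)) Hpos) as [eta [Heta Hnear]].
    assert (c <= c - eta); [|lra].
    apply Hlub. intros x [Hx HEx]. assert (x <= c) by (apply Hub; split; assumption).
    destruct (Rle_lt_dec x (c - eta)) as [|Hfar]; [assumption|].
    specialize (Hnear x ltac:(apply Rabs_def1; lra)). lra. }
  exists c. repeat split; try assumption.
  destruct (Req_dec c r2) as [->|]; lra.
Qed.

Lemma first_crossing (E : R -> R) r1 r2 :
  (forall x, r1 <= x <= r2 -> continuity_pt E x) -> r1 <= r2 -> E r1 < 0 -> 0 <= E r2 ->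
  exists c, r1 < c <= r2 /\ 0 <= E c /\ forall x, r1 <= x < c -> E x < 0.
Proof.
  intros Hc H12 H1 H2.
  set (P := fun x => r1 <= x <= r2 /\ forall y, r1 <= y <= x -> E y < 0).
  destruct (completeness P) as [c [Hub Hlub]].
  { exists r2. intros x [Hx _]. lra. }
  { exists r1. split; [lra|]. intros y Hy. replace y with r1 by lra. exact H1. }
  assert (Hc1 : r1 <= c).
  { apply Hub. split; [lra|]. intros y Hy. replace y with r1 by lra. exact H1. }
  assert (Hc2 : c <= r2) by (apply Hlub; intros x [Hx _]; lra).
  assert (Hbefore : forall y, r1 <= y < c -> E y < 0).
  { intros y Hy. destruct (Rlt_le_dec (E y) 0) as [|Hge]; [assumption|exfalso].
    assert (c <= y); [|lra].
    apply Hlub. intros x [Hx Hneg]. destruct (Rle_lt_dec x y) as [|Hyx]; [assumption|].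
    specialize (Hneg y ltac:(lra)). lra. }
  assert (HEc : 0 <= E c).
  { destruct (Rle_lt_dec 0 (E c)) as [|Hneg]; [assumption|exfalso].
    destruct (Req_dec c r2) as [->|Hne]; [lra|].
    destruct (continuity_pt_pos_near (fun x => - E x) c
                (continuity_pt_opp E c (Hc c ltac:(lra))) ltac:(lra)) as [eta [Heta Hnear]].
    set (z := Rmin (c + eta / 2) r2).
    assert (Hz : c < z <= c + eta / 2 /\ z <= r2)
      by (unfold z; repeat split; [apply Rmin_glb_lt; lra|apply Rmin_l|apply Rmin_r]).
    assert (z <= c); [|lra].
    apply Hub. split; [lra|]. intros y Hy.
    destruct (Rlt_le_dec y c) as [Hyc|Hcy]; [apply Hbefore; lra|].
    specialize (Hnear y ltac:(apply Rabs_def1; lra)). simpl in Hnear. lra. }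
  exists c. repeat split; try assumption.
  destruct (Req_dec r1 c) as [<-|]; lra.
Qed.

Lemma trap_negative (E : R -> R) R0 :
  (forall x, R0 < x -> continuity_pt E x) ->
  (forall a b, R0 < a -> a < b -> (forall x, a < x < b -> E x < 0) -> E b <= E a) ->
  forall r1 r2, R0 < r1 -> r1 <= r2 -> E r1 < 0 -> E r2 < 0.
Proof.
  intros Hc Hdecr r1 r2 H1 H12 HE1.
  destruct (Rlt_le_dec (E r2) 0) as [|HE2]; [assumption|exfalso].
  destruct (first_crossing E r1 r2) as [c [Hc12 [HEc Hneg]]];
    try (intros; apply Hc; lra); try assumption.
  assert (E c <= E r1) by (apply Hdecr; try lra; intros x Hx; apply Hneg; lra). lra.
Qed.

Lemma trap_nonpositive (E : R -> R) R0 :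
  (forall x, R0 < x -> continuity_pt E x) ->
  (forall a b, R0 < a -> a < b -> (forall x, a < x < b -> 0 < E x) -> E b <= E a) ->
  forall r1 r2, R0 < r1 -> r1 <= r2 -> E r1 <= 0 -> E r2 <= 0.
Proof.
  intros Hc Hdecr r1 r2 H1 H12 HE1.
  destruct (Rle_lt_dec (E r2) 0) as [|HE2]; [assumption|exfalso].
  destruct (last_crossing E r1 r2) as [c [Hc12 [HEc Hpos]]];
    try (intros; apply Hc; lra); try assumption.
  assert (E r2 <= E c) by (apply Hdecr; try lra; intros x Hx; apply Hpos; lra). lra.
Qed.

Definition eventually_signed (f : R -> R) (R0 : R) : Prop :=
  exists R1, R0 <= R1 /\
    ((forall r, R1 < r -> 0 <= f r) \/ (forall r, R1 < r -> f r <= 0)).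

Definition eventually_monotone (S : R -> R) (r0 : R) : Prop :=
  exists R0, r0 < R0 /\
    ((forall x y, R0 < x -> x <= y -> S x <= S y) \/
     (forall x y, R0 < x -> x <= y -> S y <= S x)).

Lemma eventually_signed_opp (f : R -> R) R0 :
  eventually_signed (fun r => - f r) R0 -> eventually_signed f R0.
Proof.
  intros [R1 [HR1 [Hs|Hs]]]; exists R1; split; [exact HR1| |exact HR1|];
    [right|left]; intros r Hr; specialize (Hs r Hr); lra.
Qed.

(* The trapping principle: let Sd = K E with K of constant strict sign, and let E decrease
   across every interval where Sd <= 0.  If K > 0, E is trapped below 0 once negative;
   if K < 0, E is trapped at or below 0 once nonpositive. *)
Lemma eventually_signed_of_product (E Sd K : R -> R) R1 :
  (forall r, R1 < r -> continuity_pt E r) ->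
  (forall r, R1 < r -> Sd r = K r * E r) ->
  (forall r, R1 < r -> 0 < K r) \/ (forall r, R1 < r -> K r < 0) ->
  (forall a b, R1 < a -> a < b -> (forall x, a < x < b -> Sd x <= 0) -> E b <= E a) ->
  eventually_signed Sd R1.
Proof.
  intros Hc HSd [HK|HK] Hdecr.
  - assert (Htrap := trap_negative E R1 Hc).
    destruct (classic (exists r1, R1 < r1 /\ E r1 < 0)) as [[r1 [Hr1 HE1]]|Hnone].
    + exists r1. split; [lra|]. right. intros r Hr.
      assert (E r < 0).
      { apply Htrap with r1; try lra. intros a b Ha Hab Hneg. apply Hdecr; try lra.
        intros x Hx. rewrite HSd by lra. specialize (HK x ltac:(lra)).
        specialize (Hneg x Hx). nra. }
      rewrite HSd by lra. specialize (HK r ltac:(lra)). nra.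
    + exists R1. split; [lra|]. left. intros r Hr. rewrite HSd by lra.
      assert (0 <= E r) by (apply Rnot_lt_le; intros HEr; apply Hnone; exists r; auto).
      specialize (HK r Hr). nra.
  - assert (Htrap := trap_nonpositive E R1 Hc).
    destruct (classic (exists r1, R1 < r1 /\ E r1 <= 0)) as [[r1 [Hr1 HE1]]|Hnone].
    + exists r1. split; [lra|]. left. intros r Hr.
      assert (E r <= 0).
      { apply Htrap with r1; try lra. intros a b Ha Hab Hpos. apply Hdecr; try lra.
        intros x Hx. rewrite HSd by lra. specialize (HK x ltac:(lra)).
        specialize (Hpos x Hx). nra. }
      rewrite HSd by lra. specialize (HK r ltac:(lra)). nra.
    + exists R1. split; [lra|]. right. intros r Hr. rewrite HSd by lra.
      assert (0 < E r) by (apply Rnot_le_lt; intros HEr; apply Hnone; exists r; auto).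
      specialize (HK r Hr). nra.
Qed.

Lemma eventually_monotone_of_signed_deriv (S Sd : R -> R) r0 R1 :
  r0 <= R1 -> (forall r, r0 < r -> derivable_pt_lim S r (Sd r)) ->
  eventually_signed Sd R1 -> eventually_monotone S r0.
Proof.
  intros HR1 Hd [R2 [HR2 Hs]]. exists (R2 + 1). split; [lra|].
  destruct Hs as [Hs|Hs]; [left|right]; intros x y Hx Hxy.
  - apply (nondecreasing_of_deriv S Sd); [lra|intros; apply Hd; lra|intros; apply Hs; lra].
  - apply (nonincreasing_of_deriv S Sd); [lra|intros; apply Hd; lra|intros; apply Hs; lra].
Qed.

(* When psi increases, E = phi(S) - psi
   decreases where S' <= 0; when psi decreases, the same holds for -E and -S'. *)
Lemma eventually_signed_of_factorization (S Sd K phi psi : R -> R) r0 R1 :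
  r0 <= R1 ->
  (forall r, r0 < r -> derivable_pt_lim S r (Sd r)) ->
  (forall r, r0 < r -> Sd r = K r * (phi (S r) - psi r)) ->
  (forall r, r0 < r -> 0 < K r) \/ (forall r, r0 < r -> K r < 0) ->
  (forall a b, r0 < a -> r0 < b -> S a <= S b -> phi (S a) <= phi (S b)) ->
  (forall r, R1 < r -> continuity_pt (fun r => phi (S r) - psi r) r) ->
  (forall x y, R1 < x -> x <= y -> psi x <= psi y) \/
  (forall x y, R1 < x -> x <= y -> psi y <= psi x) ->
  eventually_signed Sd R1.
Proof.
  intros HR1 Hd HSd HK Hphi Hc Hpsi.
  assert (HK1 : (forall r, R1 < r -> 0 < K r) \/ (forall r, R1 < r -> K r < 0))
    by (destruct HK as [HK|HK]; [left|right]; intros r Hr; apply HK; lra).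
  destruct Hpsi as [Hpsi|Hpsi].
  - (* S decreases where Sd <= 0; then phi (S r) decreases and psi increases *)
    apply (eventually_signed_of_product (fun r => phi (S r) - psi r) Sd K R1 Hc);
      [intros; apply HSd; lra|exact HK1|].
    intros a b Ha Hab Hneg.
    assert (HS : S b <= S a)
      by (apply (nonincreasing_of_deriv S Sd); [lra|intros; apply Hd; lra|exact Hneg]).
    pose proof (Hphi b a ltac:(lra) ltac:(lra) HS). pose proof (Hpsi a b Ha ltac:(lra)). lra.
  - (* symmetrically, S increases where Sd >= 0 *)
    apply eventually_signed_opp.
    apply (eventually_signed_of_product (fun r => - (phi (S r) - psi r)) _ K R1);
      [intros; apply continuity_pt_opp, Hc; assumption
      |intros; rewrite HSd by lra; ring|exact HK1|].
    intros a b Ha Hab Hneg.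
    assert (HS : S a <= S b).
    { apply (nondecreasing_of_deriv S Sd); [lra|intros; apply Hd; lra|].
      intros x Hx. specialize (Hneg x Hx). lra. }
    pose proof (Hphi a b ltac:(lra) ltac:(lra) HS). pose proof (Hpsi a b Ha ltac:(lra)). lra.
Qed.

Lemma nondecreasing_bounded_limit (T : R -> R) R0 lo hi :
  (forall x y, R0 < x -> x <= y -> T x <= T y) ->
  (forall r, R0 < r -> lo <= T r <= hi) ->
  exists l, lo <= l <= hi /\ lim_infty T l.
Proof.
  intros Hmono Hbd.
  set (P := fun y => exists x, R0 < x /\ y = T x).
  destruct (completeness P) as [l [Hub Hlub]].
  { exists hi. intros y [x [Hx ->]]. apply Hbd, Hx. }
  { exists (T (R0 + 1)), (R0 + 1). split; [lra|reflexivity]. }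
  assert (Hle : forall r, R0 < r -> T r <= l) by (intros r Hr; apply Hub; exists r; auto).
  exists l. split.
  { pose proof (Hbd (R0 + 1) ltac:(lra)). pose proof (Hle (R0 + 1) ltac:(lra)).
    split; [lra|]. apply Hlub. intros y [x [Hx ->]]. apply Hbd, Hx. }
  intros eps Heps.
  assert (Hex : exists x, R0 < x /\ l - eps < T x).
  { apply NNPP. intros Hnone. assert (l <= l - eps); [|lra].
    apply Hlub. intros y [x [Hx ->]]. apply Rnot_lt_le. intros Hlt. apply Hnone; eauto. }
  destruct Hex as [x [Hx Hlx]]. exists x. intros r Hr.
  pose proof (Hmono x r Hx Hr). pose proof (Hle r ltac:(lra)). apply Rabs_def1; lra.
Qed.

Lemma eventually_monotone_limit (S : R -> R) r0 :
  eventually_monotone S r0 -> (forall r, r0 <= r -> 0 < S r < 1) ->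
  exists l, 0 <= l <= 1 /\ lim_infty S l.
Proof.
  intros [R0 [HR0 [Hincr|Hdecr]]] Hbd.
  - apply (nondecreasing_bounded_limit S R0); [exact Hincr|].
    intros r Hr. specialize (Hbd r ltac:(lra)). lra.
  - destruct (nondecreasing_bounded_limit (fun r => - S r) R0 (-1) 0) as [l [Hl Hlim]].
    + intros x y Hx Hxy. specialize (Hdecr x y Hx Hxy). lra.
    + intros r Hr. specialize (Hbd r ltac:(lra)). lra.
    + exists (- l). split; [lra|]. intros eps Heps. destruct (Hlim eps Heps) as [M HM].
      exists M. intros r Hr. specialize (HM r Hr).
      replace (S r - - l) with (- (- S r - l)) by ring. rewrite Rabs_Ropp. exact HM.
Qed.

Section IVP.

Variables (n N1 N2 : nat) (a1 alpha1 a2 alpha2 : nat -> R).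
Variables (f1 f2 f1d f2d pcd : R -> R) (r0 c1 c2 : R) (S : R -> R).

Hypothesis hn : (2 <= n)%nat.
Hypothesis hg1 : g_data N1 a1 alpha1.
Hypothesis hg2 : g_data N2 a2 alpha2.
Hypothesis hf1c : continuous_on_closed f1 0 1.
Hypothesis hf2c : continuous_on_closed f2 0 1.
Hypothesis hf1d : C1_open_with f1 f1d 0 1.
Hypothesis hf2d : C1_open_with f2 f2d 0 1.
Hypothesis hf10 : f1 0 = 0.
Hypothesis hf21 : f2 1 = 0.
Hypothesis hf1pos : forall s, 0 < s < 1 -> 0 < f1d s.
Hypothesis hf2neg : forall s, 0 < s < 1 -> f2d s < 0.
Hypothesis hpcpos : forall s, 0 < s < 1 -> 0 < pcd s.
Hypothesis hr0 : 0 < r0.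
Hypothesis hSode : forall r, r0 < r ->
  derivable_pt_lim S r
    (Gfun N2 a2 alpha2 (c2 * Rpower r (1 - INR n)) * Ffun pcd f2 (S r)
     - Gfun N1 a1 alpha1 (c1 * Rpower r (1 - INR n)) * Ffun pcd f1 (S r)).
Hypothesis hSbd : forall r, r0 <= r -> 0 < S r < 1.

Let w (r : R) : R := Rpower r (1 - INR n).

Let Sd (r : R) : R :=
  Gfun N2 a2 alpha2 (c2 * w r) * Ffun pcd f2 (S r)
  - Gfun N1 a1 alpha1 (c1 * w r) * Ffun pcd f1 (S r).

Let X1 (r : R) : R := gfun N1 a1 alpha1 (Rabs c1 * w r) / (pcd (S r) * f1 (S r)).
Let X2 (r : R) : R := gfun N2 a2 alpha2 (Rabs c2 * w r) / (pcd (S r) * f2 (S r)).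

Lemma weight_exponent_neg : 1 - INR n < 0.
Proof. apply le_INR in hn. simpl in hn. lra. Qed.

Lemma coefficients_pos r :
  r0 <= r -> 0 < f1 (S r) /\ 0 < f2 (S r) /\ 0 < pcd (S r).
Proof.
  intros Hr. pose proof (hSbd r Hr) as Hs. repeat split.
  - exact (pos_of_increasing_from_0 f1 f1d hf1c hf1d hf10 hf1pos (S r) Hs).
  - exact (pos_of_decreasing_to_1 f2 f2d hf2c hf2d hf21 hf2neg (S r) Hs).
  - exact (hpcpos (S r) Hs).
Qed.

Lemma fluxes_pos r : r0 <= r -> 0 < X1 r /\ 0 < X2 r.
Proof.
  intros Hr. destruct (coefficients_pos r Hr) as [H1 [H2 Hp]].
  split; apply Rdiv_lt_0_compat; try apply gfun_pos; try assumption; nra.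
Qed.

(* S' = w (c2 X2 - c1 X1), using G_i(c_i w) = g_i(|c_i| w) c_i w and w > 0. *)
Lemma rhs_expanded r : r0 <= r -> Sd r = w r * (c2 * X2 r - c1 * X1 r).
Proof.
  intros Hr. destruct (coefficients_pos r Hr) as [H1 [H2 Hp]].
  assert (Hw : 0 < w r) by apply exp_pos.
  unfold Sd, X1, X2, Gfun, Ffun. rewrite !Rabs_mult, (Rabs_pos_eq (w r)) by lra.
  field. split; lra.
Qed.

(* If c1 and c2 do not have the same strict sign, both fluxes push S the same way. *)
Lemma rhs_signed_opposite_signs : c1 * c2 <= 0 -> eventually_signed Sd r0.
Proof.
  intros Hc. exists r0. split; [lra|].
  assert (Hsigns : (0 <= c2 /\ c1 <= 0) \/ (c2 <= 0 /\ 0 <= c1))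
    by (destruct (Rle_lt_dec 0 c2); destruct (Rle_lt_dec 0 c1); [|left|right|left]; nra).
  destruct Hsigns as [[Hc2 Hc1]|[Hc2 Hc1]]; [left|right]; intros r Hr;
    rewrite rhs_expanded by lra; destruct (fluxes_pos r ltac:(lra)) as [HX1 HX2];
    assert (Hw : 0 < w r) by apply exp_pos.
  - apply Rmult_le_pos; nra.
  - assert (c2 * X2 r - c1 * X1 r <= 0) by nra. nra.
Qed.

Let L1 : list (R * R) := g_terms N1 a1 alpha1 (Rabs c1).
Let L2 : list (R * R) := g_terms N2 a2 alpha2 (Rabs c2).

Let phi (s : R) : R := f1 s / f2 s.
Let psi (r : R) : R := c1 / c2 * (gpoly L1 (w r) / gpoly L2 (w r)).
Let K (r : R) : R := w r * c2 * gfun N2 a2 alpha2 (Rabs c2 * w r) / (pcd (S r) * f1 (S r)).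

Lemma coefficients_nonzero (Hc : 0 < c1 * c2) : c1 <> 0 /\ c2 <> 0.
Proof. split; intros H0; rewrite H0 in Hc; lra. Qed.

Lemma g_as_gpoly (Hc : 0 < c1 * c2) r :
  gfun N1 a1 alpha1 (Rabs c1 * w r) = gpoly L1 (w r) /\
  gfun N2 a2 alpha2 (Rabs c2 * w r) = gpoly L2 (w r).
Proof.
  assert (Hw : 0 < w r) by apply exp_pos.
  destruct (coefficients_nonzero Hc).
  split; apply gfun_as_gpoly; try exact Hw; apply Rabs_pos_lt; assumption.
Qed.

Lemma rhs_factorized (Hc : 0 < c1 * c2) r : r0 < r -> Sd r = K r * (phi (S r) - psi r).
Proof.
  intros Hr. rewrite rhs_expanded by lra.
  destruct (coefficients_pos r ltac:(lra)) as [H1 [H2 Hp]].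
  destruct (g_as_gpoly Hc r) as [HG1 HG2].
  pose proof (gfun_pos N2 a2 alpha2 (Rabs c2 * w r) hg2) as HG2pos.
  unfold X1, X2, K, phi, psi. rewrite <- HG1, <- HG2.
  destruct (coefficients_nonzero Hc). field. repeat split; try lra; assumption.
Qed.

Lemma factor_signed (Hc : 0 < c1 * c2) :
  (forall r, r0 < r -> 0 < K r) \/ (forall r, r0 < r -> K r < 0).
Proof.
  assert (HK : forall r, r0 < r -> exists k, 0 < k /\ K r = c2 * k).
  { intros r Hr. destruct (coefficients_pos r ltac:(lra)) as [H1 [H2 Hp]].
    pose proof (gfun_pos N2 a2 alpha2 (Rabs c2 * w r) hg2).
    assert (Hw : 0 < w r) by apply exp_pos.
    exists (w r * gfun N2 a2 alpha2 (Rabs c2 * w r) / (pcd (S r) * f1 (S r))).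
    split; [apply Rdiv_lt_0_compat; nra|unfold K, Rdiv; ring]. }
  destruct (coefficients_nonzero Hc) as [_ Hc2].
  destruct (Rlt_le_dec 0 c2) as [Hc2pos|Hc2neg]; [left|right]; intros r Hr;
    destruct (HK r Hr) as [k [Hk ->]]; [nra|].
  assert (c2 < 0) by (destruct Hc2neg; [assumption|contradiction]). nra.
Qed.

(* phi = f1/f2 is increasing since f1 increases and f2 decreases, both positive. *)
Lemma phi_monotone_along_S a b : r0 < a -> r0 < b -> S a <= S b -> phi (S a) <= phi (S b).
Proof.
  intros Ha Hb Hab. unfold phi.
  destruct (Rle_lt_or_eq_dec _ _ Hab) as [Hlt|Heq]; [|rewrite Heq; lra].
  pose proof (hSbd a ltac:(lra)). pose proof (hSbd b ltac:(lra)).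
  destruct (coefficients_pos a ltac:(lra)) as [H1a [H2a _]].
  destruct (coefficients_pos b ltac:(lra)) as [H1b [H2b _]].
  pose proof (increasing_of_pos_deriv f1 f1d 0 1 (proj1 hf1d) hf1pos (S a) (S b)
                ltac:(lra) Hlt ltac:(lra)).
  pose proof (decreasing_of_neg_deriv f2 f2d 0 1 (proj1 hf2d) hf2neg (S a) (S b)
                ltac:(lra) Hlt ltac:(lra)).
  unfold Rdiv. apply Rmult_le_compat; try lra.
  - left. apply Rinv_0_lt_compat. exact H2a.
  - apply Rinv_le_contravar; lra.
Qed.

(* psi is eventually monotone: the ratio G1/G2 is monotone near u = 0 and w(r) -> 0. *)
Lemma psi_eventually_monotone (Hc : 0 < c1 * c2) :
  exists R1, r0 <= R1 /\
    ((forall x y, R1 < x -> x <= y -> psi x <= psi y) \/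
     (forall x y, R1 < x -> x <= y -> psi y <= psi x)).
Proof.
  assert (HL2 : forall u, 0 < u -> 0 < gpoly L2 u).
  { intros u Hu. unfold L2. rewrite <- gfun_as_gpoly; [apply gfun_pos, hg2| |exact Hu].
    apply Rabs_pos_lt, coefficients_nonzero, Hc. }
  assert (Hratio : 0 < c1 / c2).
  { replace (c1 / c2) with (c1 * c2 / (c2 * c2)) by (field; apply coefficients_nonzero, Hc).
    apply Rdiv_lt_0_compat; nra. }
  destruct (gpoly_ratio_eventually_monotone L1 L2 HL2) as [d [Hd Hmono]].
  destruct (Rpower_tends_to_0 (1 - INR n) d weight_exponent_neg Hd) as [R' [HR' Hsmall]].
  exists (Rmax r0 R'). split; [apply Rmax_l|].
  assert (Hw : forall x y, Rmax r0 R' < x -> x <= y -> 0 < w y /\ w y <= w x /\ w x < d).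
  { intros x y Hx Hxy. pose proof (Rmax_l r0 R'). pose proof (Rmax_r r0 R').
    repeat split; [apply exp_pos|apply Rpower_antitone; [apply weight_exponent_neg|lra|lra]|].
    apply Hsmall. lra. }
  (* w is decreasing, so the monotonicity of the ratio in u = w(r) is reversed in r *)
  destruct Hmono as [Hmono|Hmono]; [right|left]; intros x y Hx Hxy;
    destruct (Hw x y Hx Hxy) as [Hwy [Hwyx Hwx]];
    apply Rmult_le_compat_l; [lra|apply Hmono; lra|lra|apply Hmono; lra].
Qed.

Lemma gap_continuous (Hc : 0 < c1 * c2) r :
  r0 < r -> continuity_pt (fun r => phi (S r) - psi r) r.
Proof.
  intros Hr. destruct (coefficients_pos r ltac:(lra)) as [H1 [H2 _]].
  pose proof (hSbd r ltac:(lra)) as HSr.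
  assert (HS : continuity_pt S r) by exact (continuity_of_derivable_lim S r _ (hSode r Hr)).
  assert (Hw : continuity_pt w r)
    by exact (continuity_of_derivable_lim _ r _ (derivable_pt_lim_power r (1 - INR n) ltac:(lra))).
  assert (Hwpos : 0 < w r) by apply exp_pos.
  assert (Hgp : forall l, continuity_pt (fun r => gpoly l (w r)) r)
    by (intros l; apply (continuity_pt_comp w (gpoly l)); [exact Hw|];
        exact (continuity_of_derivable_lim _ _ _ (gpoly_derivable l (w r) Hwpos))).
  assert (Hf : forall f fd, C1_open_with f fd 0 1 -> continuity_pt (fun r => f (S r)) r)
    by (intros f fd [Hd _]; apply (continuity_pt_comp S f); [exact HS|];
        exact (continuity_of_derivable_lim _ _ _ (Hd (S r) HSr))).
  destruct (g_as_gpoly Hc r) as [_ HG2].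
  pose proof (gfun_pos N2 a2 alpha2 (Rabs c2 * w r) hg2).
  apply (continuity_pt_minus (fun r => phi (S r)) psi).
  - apply (continuity_pt_div (fun r => f1 (S r)) (fun r => f2 (S r)));
      [exact (Hf _ _ hf1d)|exact (Hf _ _ hf2d)|lra].
  - apply (continuity_pt_scal (fun r => gpoly L1 (w r) / gpoly L2 (w r))).
    apply (continuity_pt_div (fun r => gpoly L1 (w r)) (fun r => gpoly L2 (w r)));
      [apply Hgp|apply Hgp|].
    rewrite <- HG2. lra.
Qed.

Lemma rhs_signed_same_signs (Hc : 0 < c1 * c2) :
  exists R1, r0 <= R1 /\ eventually_signed Sd R1.
Proof.
  destruct (psi_eventually_monotone Hc) as [R1 [HR1 Hpsi]]. exists R1. split; [exact HR1|].
  apply (eventually_signed_of_factorization S Sd K phi psi r0 R1 HR1 hSode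
           (rhs_factorized Hc) (factor_signed Hc) phi_monotone_along_S); [|exact Hpsi].
  intros r Hr. apply gap_continuous; [exact Hc|lra].
Qed.

Lemma solution_eventually_monotone : eventually_monotone S r0.
Proof.
  destruct (Rle_lt_dec (c1 * c2) 0) as [Hc|Hc].
  - exact (eventually_monotone_of_signed_deriv S Sd r0 r0 (Rle_refl r0) hSode
             (rhs_signed_opposite_signs Hc)).
  - destruct (rhs_signed_same_signs Hc) as [R1 [HR1 Hs]].
    exact (eventually_monotone_of_signed_deriv S Sd r0 R1 HR1 hSode Hs).
Qed.

End IVP.

Theorem theorem2p3
  (n : nat) (hn : (2 <= n)%nat)
  (N1 N2 : nat) (a1 alpha1 a2 alpha2 : nat -> R)
  (hg1 : g_data N1 a1 alpha1) (hg2 : g_data N2 a2 alpha2)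
  (* Assumption A *)
  (f1 f2 f1d f2d : R -> R)
  (hf1c : continuous_on_closed f1 0 1) (hf2c : continuous_on_closed f2 0 1)
  (hf1d : C1_open_with f1 f1d 0 1) (hf2d : C1_open_with f2 f2d 0 1)
  (hf10 : f1 0 = 0) (hf21 : f2 1 = 0)
  (hf1pos : forall s, 0 < s < 1 -> 0 < f1d s)
  (hf2neg : forall s, 0 < s < 1 -> f2d s < 0)
  (* Assumption B: pcd = p_c' is C^1 on (0,1) and positive there *)
  (pcd pcdd : R -> R)
  (hpc : C1_open_with pcd pcdd 0 1)
  (hpcpos : forall s, 0 < s < 1 -> 0 < pcd s)
  (* data of (IVP) *)
  (r0 c1 c2 s0 : R) (hr0 : 0 < r0) (hs0 : 0 < s0 < 1)
  (* S solves (IVP) on [r0, oo) *)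
  (S : R -> R)
  (hSr0 : S r0 = s0)
  (hScont : limit1_in S (fun r => r0 <= r) s0 r0)
  (hSode : forall r, r0 < r ->
     derivable_pt_lim S r
       (Gfun N2 a2 alpha2 (c2 * Rpower r (1 - INR n)) * Ffun pcd f2 (S r)
        - Gfun N1 a1 alpha1 (c1 * Rpower r (1 - INR n)) * Ffun pcd f1 (S r)))
  (hSbd : forall r, r0 <= r -> 0 < S r < 1) :
  (exists R0, r0 < R0 /\
     ((forall x y, R0 < x -> x <= y -> S x <= S y) \/
      (forall x y, R0 < x -> x <= y -> S y <= S x)))
  /\ (exists l, 0 <= l <= 1 /\ lim_infty S l).
Proof.
  pose proof (solution_eventually_monotone n N1 N2 a1 alpha1 a2 alpha2 f1 f2 f1d f2d pcd
                r0 c1 c2 S hn hg1 hg2 hf1c hf2c hf1d hf2d hf10 hf21 hf1pos hf2neg hpcpos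
                hr0 hSode hSbd) as Hmono.
  split; [exact Hmono|].
  exact (eventually_monotone_limit S r0 Hmono hSbd).
Qed.
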